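(* Let $N\ge1$. For every $\Lambda\subseteq P_N$ and $\sigma\in S_N$, the maps $T_\Lambda$ and $R_\sigma$ are homeomorphisms of $\mathbb{D}_N$ onto itself satisfying $\pi\circ T_\Lambda=\pi$ and $\pi\circ R_\sigma=\pi$, i.e. they lie in $\mathrm{Aut}(\mathbb{D}_N)_\pi$. Furthermore, if $\mathfrak{T}_N$ and $\mathfrak{R}_N$ denote the groups generated by the $T_\Lambda$ and by the $R_\sigma$ respectively, then the set $\mathfrak{T}_N\mathfrak{R}_N$ equipped with the operation $$T_{\Lambda_1}R_{\sigma_1}\cdot T_{\Lambda_2}R_{\sigma_2}=T_{\Lambda_1\oplus\sigma_1(\Lambda_2)}R_{\sigma_1\sigma_2}\qquad(\Lambda_i\subseteq P_N,\ \sigma_i\in S_N)$$ is a group isomorphic to the outer semidirect product $\{\pm1\}^N\rtimes_\varphi S_N$ with respect to $\varphi:S_N\to\mathrm{Aut}(\{\pm1\}^N)$, $\varphi_\sigma(\varepsilon_1,\dots,\varepsilon_N)=(\varepsilon_{\sigma^{-1}(1)},\dots,\varepsilon_{\sigma^{-1}(N)})$.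
   Context: $P_N=\{1,\dots,N\}$; vectors $v\in\mathbb{C}^N$ are functions on $P_N$, $v^{-1}[S]=\{\ell:v_\ell\in S\}$; $\mathrm{Tr}(v,\Lambda):=\sum_{\ell\in\Lambda}v_\ell$; $\oplus$ is symmetric difference of sets. $\mathcal{C}:=\{z\in\mathbb{C}:\mathrm{Re}(z)>0\text{ or }z\in i\mathbb{R}_{>0}\}$. $\mathbb{D}_N:=\{(w,a,\theta)\in\mathbb{C}\times\mathbb{C}^N\times\mathbb{R}^N: a^{-1}[0]\subseteq\theta^{-1}[\mathbb{R}\smallsetminus\mathbb{Z}]\}$ (i.e. $\theta_\ell\notin\mathbb{Z}$ whenever $a_\ell=0$), with the subspace topology. $\pi:\mathbb{D}_N\to\mathbb{C}$, $\pi(w,a,\theta):=w-\mathrm{Tr}(a,a^{-1}[-\mathcal{C}])$. $\mathrm{Aut}(\mathbb{D}_N)$ is the group of homeomorphisms of $\mathbb{D}_N$ and $\mathrm{Aut}(\mathbb{D}_N)_\pi:=\{g\in\mathrm{Aut}(\mathbb{D}_N):\pi\circ g=\pi\}$. For $\Lambda\subseteq P_N$, $d(\Lambda)$ is the $N\times N$ diagonal matrix with $(\ell,\ell)$-entry $-1$ if $\ell\in\Lambda$, $1$ otherwise, and $T_\Lambda(w,a,\theta):=(w-\mathrm{Tr}(a,\Lambda),\,a\,d(\Lambda),\,\theta\,d(\Lambda))$ (row vectors). For $\sigma\in S_N$, $r(\sigma)$ is the $N\times N$ matrix whose $\ell$-th column is the $\sigma^{-1}(\ell)$-th column of the identity matrix,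 and $R_\sigma(w,a,\theta):=(w,\,a\,r(\sigma),\,\theta\,r(\sigma))$. *)

From HB Require Import structures.
From mathcomp Require Import all_boot all_order all_algebra all_fingroup.
From mathcomp Require Import all_classical all_reals all_analysis.
From mathcomp Require Import complex.
Set Implicit Arguments. Unset Strict Implicit. Unset Printing Implicit Defensive.
Import Order.TTheory GRing.Theory Num.Theory.
Import numFieldTopology.Exports numFieldNormedType.Exports.
Local Open Scope classical_set_scope.
Local Open Scope ring_scope.

Definition Cplx (R : realType) : numClosedFieldType := R[i].

(* Ambient space C x C^N x R^N (row vectors), product topology.
   Indices: P_N = {1,...,N} is represented by 'I_N = {0,...,N-1}. *)
Definition pt (R : realType) (N : nat) :=
  (Cplx R * 'rV[Cplx R]_N * 'rV[R]_N)%type.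

Definition pw R N (p : pt R N) : Cplx R := p.1.1.
Definition pa R N (p : pt R N) : 'rV[Cplx R]_N := p.1.2.
Definition pth R N (p : pt R N) : 'rV[R]_N := p.2.

Definition coneC (R : realType) (z : Cplx R) : Prop :=
  0 < complex.Re z \/ (complex.Re z = 0 /\ 0 < complex.Im z).

Definition Tr (K : nmodType) N (v : 'rV[K]_N) (L : {set 'I_N}) : K :=
  \sum_(l in L) v ord0 l.

Definition vpre (K : Type) N (v : 'rV[K]_N) (S : set K) : {set 'I_N} :=
  [set l : 'I_N | `[< S (v ord0 l) >]].

Definition DN (R : realType) (N : nat) : set (pt R N) :=
  [set p | forall l : 'I_N, pa p ord0 l = 0 ->
             forall k : int, pth p ord0 l != k%:~R].

Definition piD (R : realType) N (p : pt R N) : Cplx R :=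
  pw p - Tr (pa p) (vpre (pa p) [set z | coneC (- z)]).

Definition dmx (K : pzRingType) N (L : {set 'I_N}) : 'M[K]_N :=
  \matrix_(i, j) (if i == j then (if i \in L then -1 else 1) else 0).

Definition rmx (K : pzRingType) N (s : 'S_N) : 'M[K]_N :=
  \matrix_(i, j) (i == (s^-1)%g j)%:R.

Definition TL (R : realType) N (L : {set 'I_N}) (p : pt R N) : pt R N :=
  (pw p - Tr (pa p) L, pa p *m dmx _ L, pth p *m dmx _ L).

Definition Rs (R : realType) N (s : 'S_N) (p : pt R N) : pt R N :=
  (pw p, pa p *m rmx _ s, pth p *m rmx _ s).

Definition homeo_onto (T : topologicalType) (D : set T) (f : T -> T) : Prop :=
  exists g : T -> T,
    (forall x, D x -> D (f x)) /\ (forall x, D x -> D (g x)) /\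
    (forall x, D x -> g (f x) = x) /\ (forall x, D x -> f (g x) = x) /\
    {within D, continuous f} /\ {within D, continuous g}.

Definition in_Aut_pi (R : realType) N (f : pt R N -> pt R N) : Prop :=
  homeo_onto (@DN R N) f /\ (forall p, DN p -> piD (f p) = piD p).

(* equality of maps on D_N (elements of Aut(D_N) are maps D_N -> D_N) *)
Definition eqD (R : realType) N (f g : pt R N -> pt R N) : Prop :=
  forall p, DN p -> f p = g p.

Definition symdiff (T : finType) (A B : {set T}) : {set T} :=
  (A :\: B) :|: (B :\: A).

(* composition sigma1 sigma2 := sigma1 o sigma2 (mathcomp's product on
   permutations is left-to-right: (s * t) x = t (s x)) *)
Definition permcomp N (s1 s2 : 'S_N) : 'S_N := (s2 * s1)%g.

(* {+-1} coded by bool: false = +1, true = -1; multiplication = xor.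
   phi_sigma(eps)_l = eps_{sigma^{-1}(l)} *)
Definition phi N (s : 'S_N) (e : {ffun 'I_N -> bool}) : {ffun 'I_N -> bool} :=
  [ffun l => e ((s^-1)%g l)].

Definition sdp N := ({ffun 'I_N -> bool} * 'S_N)%type.
Definition sdp_mul N (x y : sdp N) : sdp N :=
  ([ffun l => x.1 l (+) phi x.2 y.1 l], permcomp x.2 y.2).

Definition pimg N (s : 'S_N) (L : {set 'I_N}) : {set 'I_N} := [set s l | l in L].

(* For a_l ≠ 0 exactly one of a_l, -a_l lies in -C, so flipping a_l moves it
   into or out of a^{-1}[-C] and the shift of w is exactly compensated in π;
   R_σ merely permutes the coordinates. Both maps are affine, hence
   continuous, T_Λ is an involution and R_σ^{-1} = R_{σ^{-1}}, and both
   preserve the condition defining D_N. Evaluating at a point with a = (1, ..., N)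
   shows that T_Λ R_σ determines (Λ, σ) on D_N, so (ε, σ) ↦ T_{ε^{-1}(-1)} R_σ
   is injective and the multiplication law reduces to the identity
   supp(ε₁ φ_{σ₁}(ε₂)) = supp ε₁ ⊕ σ₁(supp ε₂). *)
From HB Require Import structures.
From mathcomp Require Import all_boot all_order all_algebra all_fingroup.
From mathcomp Require Import all_classical all_reals all_analysis.
From mathcomp Require Import complex.
From mathcomp Require Import lra.
Import Order.TTheory GRing.Theory Num.Theory.
Import numFieldTopology.Exports numFieldNormedType.Exports.
Local Open Scope ring_scope.

Lemma continuous_mx_entry {K : topologicalType} {m n} (i : 'I_m) (j : 'I_n) :
  continuous (fun A : 'M[K]_(m, n) => A i j).
Proof.
move=> A B AijB.
exists (fun i' j' => if (i' == i) && (j' == j) then B else setT).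
  by move=> i' j'; case: ifP => [/andP[/eqP-> /eqP->] //|_]; exact: filterT.
by move=> A' /(_ i j); rewrite !eqxx.
Qed.

Lemma continuous_mx_of_entries (T K : topologicalType) m n
    (f : T -> 'M[K]_(m, n)) :
  (forall i j, continuous (fun x => f x i j)) -> continuous f.
Proof.
move=> fC x A [P xP PA]; apply: filterS (fun y Py => PA (f y) Py) _.
by apply: filter_forall => i; apply: filter_forall => j; exact: fC (xP i j).
Qed.

Lemma continuous_fst (T U : topologicalType) : continuous (@fst T U).
Proof. by move=> x; apply: cvg_fst. Qed.

Lemma continuous_snd (T U : topologicalType) : continuous (@snd T U).
Proof. by move=> x; apply: cvg_snd. Qed.

Lemma continuous_pair (T U V : topologicalType) (f : T -> U) (g : T -> V) :
  continuous f -> continuous g -> continuous (fun x => (f x, g x)).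
Proof. by move=> fC gC x; apply: cvg_pair; [exact: fC | exact: gC]. Qed.

Lemma continuous_sum (T : topologicalType) (K : numFieldType)
    (V : normedModType K) (I : Type) (r : seq I) (P : pred I)
    (f : I -> T -> V) :
  (forall i, continuous (f i)) ->
  continuous (fun x => \sum_(i <- r | P i) f i x).
Proof.
move=> fC; rewrite -fct_sumE.
apply: (big_ind (fun g : T -> V => continuous g)) => //.
- exact: (@cst_continuous T V 0).
- by move=> g h gC hC x; exact: continuousD (gC x) (hC x).
Qed.

Lemma continuous_mulmxr {K : numFieldType} {m n p} (M : 'M[K]_(n, p)) :
  continuous (fun A : 'M[K]_(m, n) => A *m M).
Proof.
apply: continuous_mx_of_entries => i j; under eq_fun do rewrite mxE.
apply: continuous_sum => k A.
exact: continuous_comp (continuous_mx_entry i k A) (@mulrr_continuous _ (M k j) _).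
Qed.

Lemma continuous_Tr {K : numFieldType} {N} (L : {set 'I_N}) :
  continuous (fun v : 'rV[K]_N => Tr v L).
Proof. by apply: continuous_sum => l; exact: continuous_mx_entry. Qed.

Lemma homeo_onto_cancel (T : topologicalType) (D : set T) (f g : T -> T) :
  continuous f -> continuous g ->
  (forall x, D x -> D (f x)) -> (forall x, D x -> D (g x)) ->
  cancel f g -> cancel g f -> homeo_onto D f.
Proof.
move=> fC gC Df Dg fK gK; exists g; do 2!split => //.
split; first by move=> x _; exact: fK.
split; first by move=> x _; exact: gK.
by split; exact: continuous_subspaceT.
Qed.

Lemma dmxE (K : pzRingType) N (a : 'rV[K]_N) L i j :
  (a *m dmx K L) i j = if j \in L then - a i j else a i j.
Proof.
rewrite mxE (bigD1 j) //= big1 ?addr0 => [|k /negbTE kj]; last first.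
  by rewrite mxE kj mulr0.
by rewrite mxE eqxx; case: ifP; rewrite ?mulrN1 ?mulr1.
Qed.

Lemma rmxE (K : pzRingType) N (a : 'rV[K]_N) (s : 'S_N) i j :
  (a *m rmx K s) i j = a i ((s^-1)%g j).
Proof.
rewrite mxE (bigD1 ((s^-1)%g j)) //= big1 ?addr0 => [|k /negbTE ks].
  by rewrite mxE eqxx mulr1.
by rewrite mxE ks mulr0.
Qed.

Lemma coneC_oppP {R : realType} {z : Cplx R} :
  z != 0 -> coneC (- z) <-> ~ coneC z.
Proof.
case: z => a b /= z0; rewrite /coneC /=; split.
  by move=> [?|[? ?]] [?|[? ?]]; lra.
move=> ncz; have [a0|a0|a0] := ltrgtP a 0; first by left; lra.
  by case: ncz; left.
right; split; first lra.
have [b0|b0|b0] := ltrgtP b 0; first lra.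
  by case: ncz; right.
by move: z0; rewrite a0 b0 eqxx.
Qed.

Lemma coneC_flip {R : realType} (z : Cplx R) :
  z + (if `[< coneC z >] then - z else 0) =
  if `[< coneC (- z) >] then z else 0.
Proof.
have [->|z0] := eqVneq z 0; first by rewrite oppr0 !if_same addr0.
have := coneC_oppP z0.
case: (asboolP (coneC z)) => cz; case: (asboolP (coneC (- z))) => cNz.
- by case=> /(_ cNz).
- by rewrite addrN.
- by rewrite addr0.
- by case=> _ /(_ cz).
Qed.

Lemma signed_succ_inj (K : numDomainType) (b1 b2 : bool) (n1 n2 : nat) :
  (if b1 then - n1.+1%:R else n1.+1%:R) =
  (if b2 then - n2.+1%:R else n2.+1%:R) :> K -> b1 = b2 /\ n1 = n2.
Proof.
have opp_succ m n : - m.+1%:R != n.+1%:R :> K.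
  by rewrite eq_sym -subr_eq0 opprK -natrD pnatr_eq0 addSn.
case: b1; case: b2 => /eqP; rewrite ?eqr_opp ?eqr_nat ?eqSS ?(negbTE (opp_succ _ _)) //.
- by move/eqP.
- by rewrite eq_sym (negbTE (opp_succ _ _)).
- by move/eqP.
Qed.

Section Maps.
Context {R : realType} {N : nat}.
Implicit Types (p : pt R N) (L : {set 'I_N}) (s : 'S_N).

Lemma continuous_pw : continuous (@pw R N).
Proof. by move=> p; exact: continuous_comp (continuous_fst _ _ _) (continuous_fst _ _ _). Qed.

Lemma continuous_pa : continuous (@pa R N).
Proof. by move=> p; exact: continuous_comp (continuous_fst _ _ _) (continuous_snd _ _ _). Qed.

Lemma continuous_TL L : continuous (@TL R N L).
Proof.
apply: continuous_pair; first apply: continuous_pair => p.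
- exact: continuousB (continuous_pw p) (continuous_comp (continuous_pa p) (continuous_Tr _ _)).
- exact: continuous_comp (continuous_pa p) (continuous_mulmxr _ _).
- by move=> p; exact: continuous_comp (continuous_snd _ _ _) (continuous_mulmxr _ _).
Qed.

Lemma continuous_Rs s : continuous (@Rs R N s).
Proof.
apply: continuous_pair; first apply: continuous_pair => //= p.
- exact: continuous_pw.
- exact: continuous_comp (continuous_pa p) (continuous_mulmxr _ _).
- by move=> p; exact: continuous_comp (continuous_snd _ _ _) (continuous_mulmxr _ _).
Qed.

Lemma TLK L : involutive (@TL R N L).
Proof.
case=> [[w a] th]; rewrite /TL /pw /pa /pth /=; congr (_, _, _).
- rewrite /Tr -addrA -opprD -big_split /= big1 ?oppr0 ?addr0 // => l lL.
  by rewrite dmxE lL addrN.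
- by apply/rowP => j; rewrite !dmxE; case: (j \in L); rewrite ?opprK.
- by apply/rowP => j; rewrite !dmxE; case: (j \in L); rewrite ?opprK.
Qed.

Lemma RsK s : cancel (@Rs R N s) (Rs (s^-1)%g).
Proof.
case=> [[w a] th]; rewrite /Rs /pw /pa /pth /=.
by congr (_, _, _); apply/rowP => j; rewrite !rmxE invgK permK.
Qed.

Lemma RsKV s : cancel (@Rs R N (s^-1)%g) (Rs s).
Proof. by move=> p; have := RsK (s^-1)%g p; rewrite invgK. Qed.

Lemma DN_TL L p : DN p -> DN (TL L p).
Proof.
move=> Dp l; rewrite /TL /pa /pth /= !dmxE; case: ifP => _; last exact: Dp.
move/eqP; rewrite oppr_eq0 => /eqP /Dp thZ k.
by rewrite eqr_oppLR -mulrNz thZ.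
Qed.

Lemma DN_Rs s p : DN p -> DN (Rs s p).
Proof. by move=> Dp l; rewrite /Rs /pa /pth /= !rmxE; exact: Dp. Qed.

Lemma piD_TL L p : piD (TL L p) = piD p.
Proof.
rewrite /piD /TL /pw /pa /= -addrA -opprD; congr (_ - _).
rewrite /Tr big_mkcond [X in _ + X]big_mkcond [RHS]big_mkcond -big_split /=.
apply: eq_bigr => l _; rewrite /vpre !inE dmxE.
by case: (l \in L); rewrite ?add0r //= opprK coneC_flip.
Qed.

Lemma piD_Rs s p : piD (Rs s p) = piD p.
Proof.
rewrite /piD /Rs /pw /pa /=; congr (_ - _).
rewrite /Tr big_mkcond (reindex_inj (@perm_inj _ s)) [RHS]big_mkcond /=.
by apply: eq_bigr => l _; rewrite /vpre !inE !rmxE permK.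
Qed.

(* On the test point with a = (1, ..., N), the a-component of
   T_L R_s has entries ±(s^{-1}(j) + 1), signs given by L. *)
Lemma TL_Rs_inj L1 s1 L2 s2 :
  eqD (@TL R N L1 \o Rs s1) (TL L2 \o Rs s2) -> L1 = L2 /\ s1 = s2.
Proof.
move=> eq12; pose p0 : pt R N := (0, \row_(j < N) (j : nat).+1%:R, 0).
have Dp0 : DN p0 by move=> l; rewrite /pa /= mxE => /eqP; rewrite pnatr_eq0.
have entry j : (j \in L1) = (j \in L2) /\ (s1^-1 j = s2^-1 j)%g.
  have := congr1 (fun p => pa p ord0 j) (eq12 p0 Dp0).
  rewrite /TL /Rs /pa /= !dmxE !rmxE !mxE.
  by case/signed_succ_inj => ->; split => //; exact: val_inj.
split; first by apply/setP => j; case: (entry j).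
by apply: invg_inj; apply/permP => j; case: (entry j).
Qed.

End Maps.

Definition sign_support {N} (e : {ffun 'I_N -> bool}) : {set 'I_N} :=
  [set l | e l].

Lemma sign_support_inj {N} : injective (@sign_support N).
Proof.
by move=> e1 e2 /setP e12; apply/ffunP => l; have := e12 l; rewrite !inE.
Qed.

Lemma sign_support_mem {N} (L : {set 'I_N}) :
  sign_support [ffun l => l \in L] = L.
Proof. by apply/setP => l; rewrite inE ffunE. Qed.

Lemma pimgE {N} (s : 'S_N) L l : (l \in pimg s L) = ((s^-1)%g l \in L).
Proof. by rewrite /pimg -{1}(permKV s l) mem_imset //; exact: perm_inj. Qed.

Lemma sign_support_mul {N} (x y : sdp N) :
  sign_support (sdp_mul x y).1 =
  symdiff (sign_support x.1) (pimg x.2 (sign_support y.1)).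
Proof.
apply/setP => l; rewrite /symdiff /phi !inE !ffunE pimgE !inE.
by case: (x.1 l); case: (y.1 _).
Qed.

Theorem proposition1 (R : realType) (N : nat) (hN : (0 < N)%N) :
  (forall L : {set 'I_N}, in_Aut_pi (@TL R N L)) /\
  (forall s : 'S_N, in_Aut_pi (@Rs R N s)) /\
  exists Phi : sdp N -> (pt R N -> pt R N),
    [/\ (forall x, exists L s, eqD (Phi x) (TL L \o Rs s)),
        (forall L s, exists x, eqD (Phi x) (TL L \o Rs s)),
        (forall x y, eqD (Phi x) (Phi y) -> x = y) &
        (forall x y L1 s1 L2 s2,
           eqD (Phi x) (TL L1 \o Rs s1) -> eqD (Phi y) (TL L2 \o Rs s2) ->
           eqD (Phi (sdp_mul x y))
               (TL (symdiff L1 (pimg s1 L2)) \o Rs (permcomp s1 s2)))].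
Proof.
split; [|split].
- move=> L; split; last by move=> p _; exact: piD_TL.
  exact: homeo_onto_cancel (continuous_TL L) (continuous_TL L)
    (DN_TL L) (DN_TL L) (TLK L) (TLK L).
- move=> s; split; last by move=> p _; exact: piD_Rs.
  exact: homeo_onto_cancel (continuous_Rs s) (continuous_Rs _)
    (DN_Rs s) (DN_Rs _) (RsK s) (RsKV s).
exists (fun x => TL (sign_support x.1) \o @Rs R N x.2); split.
- by move=> x; exists (sign_support x.1), x.2.
- by move=> L s; exists ([ffun l => l \in L], s); rewrite /= sign_support_mem.
- move=> [e1 s1] [e2 s2] /TL_Rs_inj /= [/sign_support_inj -> ->] //.
- move=> x y L1 s1 L2 s2 /TL_Rs_inj [<- <-] /TL_Rs_inj [<- <-] p _.
  by rewrite -sign_support_mul.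
Qed.
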